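(* Let $A \in \{0,1\}^{n \times n}$ be a uniformly random binary matrix (entries i.i.d. taking values $0$ and $1$ with probability $1/2$ each). Then \[ \mathbb{P}[A \text{ is factorizable}] \leq \sum_{(n_1,n_2) \in \mathcal{C}} \frac{2^{n_1^2+n_2^2}}{2^{n^2}}, \] where $\mathcal{C}$ is the set of compatible pairs for $n$.
   Context: A compatible pair for $n$ is a pair of integers $(n_1,n_2)$ with $n_1,n_2$ positive divisors of $n$, $n_1,n_2\notin\{1,n\}$, and $n_1n_2=n$. A binary matrix $A\in\{0,1\}^{n\times n}$ is factorizable (decomposable) if there exist $\ell>1$ and matrices $A_i\in\{0,1\}^{n_i\times n_i}$ with $n_i>1$ such that $A=A_1\otimes\cdots\otimes A_\ell$, where the Kronecker product uses Boolean arithmetic ($1+1=1$). *)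

From mathcomp Require Import all_boot all_order all_algebra.
From mathcomp Require Import boolp.
Set Implicit Arguments. Unset Strict Implicit. Unset Printing Implicit Defensive.
Import GRing.Theory Num.Theory.

(* Total accessor to the entries of a square boolean matrix, indexed by nat
   (false outside the range; only used inside the range below). *)
Definition bent (m : nat) (A : 'M[bool]_m) (i j : nat) : bool :=
  match insub i, insub j with
  | Some i', Some j' => A i' j'
  | _, _ => false
  end.

(* Boolean Kronecker product: entry ((i1,i2),(j1,j2)) at row i1*m2+i2,
   column j1*m2+j2 is A1 i1 j1 && A2 i2 j2  (Boolean arithmetic). *)
Definition bkron (m1 m2 : nat) (A1 : 'M[bool]_m1) (A2 : 'M[bool]_m2)
  : 'M[bool]_(m1 * m2) :=
  \matrix_(i < m1 * m2, j < m1 * m2)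
     (bent A1 (i %/ m2) (j %/ m2) && bent A2 (i %% m2) (j %% m2)).

Definition smx := {m : nat & 'M[bool]_m}.

Definition skron (X Y : smx) : smx := Tagged (fun m => 'M[bool]_m) (bkron (tagged X) (tagged Y)).

(* A is factorizable iff A = A_1 (x) A_2 (x) ... (x) A_l with l > 1 and
   every A_i of size n_i > 1.  The list B :: Bs is [A_1; ...; A_l]. *)
Definition factorizable (n : nat) (A : 'M[bool]_n) : Prop :=
  exists (B : smx) (Bs : seq smx),
    [/\ Bs != [::], all (fun X : smx => 1 < tag X) (B :: Bs)
      & foldl skron B Bs = Tagged (fun m => 'M[bool]_m) A].

Definition compatible (n n1 n2 : nat) : bool :=
  [&& 0 < n1, 0 < n2, n1 %| n, n2 %| n,
      n1 \notin [:: 1; n], n2 \notin [:: 1; n] & n1 * n2 == n].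

From mathcomp Require Import all_boot all_order all_algebra.
From mathcomp Require Import boolp.
Set Implicit Arguments. Unset Strict Implicit. Unset Printing Implicit Defensive.
Import GRing.Theory Num.Theory.
Local Open Scope ring_scope.

(* Grouping the first l - 1 factors shows that every factorizable matrix is a
   Kronecker product A_1 (x) A_2 of just two factors of sizes n_1, n_2 > 1, so
   (n_1, n_2) is a compatible pair.  For a fixed compatible pair there are at
   most 2^(n_1^2) * 2^(n_2^2) such products, and a union bound over the pairs
   gives the estimate after dividing by the 2^(n^2) matrices of size n. *)

Lemma leq_card_bigcup (I T : finType) (P : pred I) (S : I -> {set T}) :
  (#|\bigcup_(i | P i) S i| <= \sum_(i | P i) #|S i|)%N.
Proof.
apply: (big_ind2 (fun (U : {set T}) k => #|U| <= k)%N) => [|U1 k1 U2 k2 h1 h2|//].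
- by rewrite cards0.
- exact: leq_trans (leq_card_setU U1 U2).1 (leq_add h1 h2).
Qed.

Lemma compatible_mul m1 m2 :
  (1 < m1)%N -> (1 < m2)%N -> compatible (m1 * m2) m1 m2.
Proof.
move=> gt1_m1 gt1_m2; rewrite /compatible !inE dvdn_mulr ?dvdn_mull // eqxx.
rewrite !negb_or !neq_ltn gt1_m1 gt1_m2 (ltnW gt1_m1) (ltnW gt1_m2) /=.
by rewrite ltn_Pmulr ?ltn_Pmull ?orbT // ltnW.
Qed.

Lemma tag_foldl_skron_gt1 (B : smx) (Bs : seq smx) :
  (1 < tag B)%N -> all (fun X : smx => 1 < tag X)%N Bs ->
  (1 < tag (foldl skron B Bs))%N.
Proof.
elim: Bs B => [|X Bs IHBs] B //= gt1_B /andP[gt1_X gt1_Bs].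
by apply: IHBs gt1_Bs; rewrite /= (leq_trans gt1_B) // leq_pmulr // ltnW.
Qed.

Lemma factorizable_skron2 n (A : 'M[bool]_n) : factorizable A ->
  exists X Y : smx,
    [/\ (1 < tag X)%N, (1 < tag Y)%N & skron X Y = Tagged _ A].
Proof.
case=> B [Bs [+ gt1_all]]; case/lastP: Bs gt1_all => [//|Bs Y] gt1_all _.
rewrite foldl_rcons => eqA; exists (foldl skron B Bs), Y; split=> //.
- by move: gt1_all; rewrite /= all_rcons => /and3P[? _]; apply: tag_foldl_skron_gt1.
- by move/allP: gt1_all; apply; rewrite inE mem_rcons mem_head orbT.
Qed.

Definition resize_mx n m (B : 'M[bool]_m) : 'M[bool]_n :=
  \matrix_(i < n, j < n) bent B i j.

Lemma resize_mx_id n (A : 'M[bool]_n) : resize_mx n A = A.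
Proof. by apply/matrixP => i j; rewrite mxE /bent !valK. Qed.

Lemma Tagged_mx_resize n m (A : 'M[bool]_n) (B : 'M[bool]_m) :
  Tagged (fun k => 'M[bool]_k) B = Tagged _ A -> A = resize_mx n B.
Proof.
move=> eqBA; have eq_mn : m = n := congr1 tag eqBA; subst m.
move/(congr1 (tagged_as (Tagged (fun k => 'M[bool]_k) B))): eqBA.
by rewrite !tagged_asE => ->; rewrite resize_mx_id.
Qed.

Definition kron_set n (p : 'I_n.+1 * 'I_n.+1) : {set 'M[bool]_n} :=
  [set resize_mx n (bkron M.1 M.2) | M : 'M[bool]_p.1 * 'M[bool]_p.2].

Lemma card_kron_set n (p : 'I_n.+1 * 'I_n.+1) :
  (#|kron_set p| <= 2 ^ (p.1 ^ 2 + p.2 ^ 2))%N.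
Proof.
apply: leq_trans (leq_imset_card _ _) _.
by rewrite card_prod !card_mx card_bool expnD -!mulnn.
Qed.

Lemma factorizable_kron_set n (A : 'M[bool]_n) : factorizable A ->
  exists2 p : 'I_n.+1 * 'I_n.+1, compatible n p.1 p.2 & A \in kron_set p.
Proof.
move=> /factorizable_skron2[[m1 M1] [[m2 M2] [/= gt1_m1 gt1_m2 eqA]]].
have mul_m12 : (m1 * m2 = n)%N := congr1 tag eqA.
have lt_m1 : (m1 < n.+1)%N by rewrite ltnS -mul_m12 leq_pmulr // ltnW.
have lt_m2 : (m2 < n.+1)%N by rewrite ltnS -mul_m12 leq_pmull // ltnW.
exists (Ordinal lt_m1, Ordinal lt_m2).
  by rewrite /= -[in compatible n]mul_m12 compatible_mul.
by rewrite (Tagged_mx_resize eqA); apply/imsetP; exists (M1, M2).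
Qed.

Lemma card_factorizable n :
  (#|[set A : 'M[bool]_n | `[< factorizable A >]]|
     <= \sum_(p : 'I_n.+1 * 'I_n.+1 | compatible n p.1 p.2)
          2 ^ (p.1 ^ 2 + p.2 ^ 2))%N.
Proof.
set F := [set A | _].
have sub_F : F \subset \bigcup_(p : 'I_n.+1 * 'I_n.+1 | compatible n p.1 p.2) kron_set p.
  apply/subsetP => A; rewrite inE => /asboolP /factorizable_kron_set [p p_cp A_p].
  by apply/bigcupP; exists p.
apply: leq_trans (subset_leq_card sub_F) (leq_trans (leq_card_bigcup _ _) _).
by apply: leq_sum => p _; apply: card_kron_set.
Qed.

(* Uniform probability on {0,1}^{n x n}: #favourable / #all. *)
Theorem lemma2 (n : nat) :
  (#|[set A : 'M[bool]_n | `[< factorizable A >]]|%:R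
     / #|{: 'M[bool]_n}|%:R : rat)
  <= \sum_(p : 'I_n.+1 * 'I_n.+1 | compatible n p.1 p.2)
        ((2 ^ (p.1 ^ 2 + p.2 ^ 2))%N%:R / (2 ^ (n ^ 2))%N%:R).
Proof.
rewrite card_mx card_bool mulnn -mulr_suml -natr_sum.
by rewrite ler_wpM2r ?invr_ge0 ?ler0n // ler_nat card_factorizable.
Qed.
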